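(* Let $S^0$ be an adequate transversal of a quasi-adequate semigroup $S$. If $x\in E(S)$ then $x^0\in E^0$. In particular, if $x\in I\cup\Lambda$ then $x^0\in E^0$.
   Context: For a semigroup $S$, $S^1$ is $S$ with an identity adjoined, $E(S)$ its idempotents, $\mathcal{L},\mathcal{R}$ Green's relations. $\mathcal{R}^\ast=\{(a,b):\forall x,y\in S^1,\ xa=ya\iff xb=yb\}$, $\mathcal{L}^\ast=\{(a,b):\forall x,y\in S^1,\ ax=ay\iff bx=by\}$. $S$ is abundant if each $\mathcal{R}^\ast$- and $\mathcal{L}^\ast$-class contains an idempotent; adequate if also idempotents commute (then $a^+$, $a^\ast$ are the unique idempotents $\mathcal{R}^\ast$-, resp. $\mathcal{L}^\ast$-related to $a$). Quasi-adequate: abundant with $E(S)$ a subsemigroup. An abundant subsemigroup $U$ of abundant $S$ is a $\ast$-subsemigroup if $\mathcal{L}^\ast(U)=\mathcal{L}^\ast(S)\cap(U\times U)$, $\mathcal{R}^\ast(U)=\mathcal{R}^\ast(S)\cap(U\times U)$. An adequate $\ast$-subsemigroup $S^0$ of abundant $S$ is an adequate transversal if each $x\in S$ has a unique $\overline{x}\in S^0$ and idempotents $e,f$ of $S$ (then unique, written $e_x,f_x$) with $x=e\overline{x}f$, $e\,\mathcal{L}\,\overline{x}^+$, $f\,\mathcal{R}\,\overline{x}^\ast$. $E^0=E(S^0)$, $I=\{e_x:x\in S\}$, $\Lambda=\{f_x:x\in S\}$. For a regular element $x$ of $S$, $x^0$ denotes the unique inverse of $x$ with $xx^0=e_x$ and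 $x^0x=f_x$ (it is the unique inverse of $x$ lying in $S^0$). *)

Set Implicit Arguments.

Section Semigroups.
Variable T : Type.
Variable mul : T -> T -> T.

Definition associative : Prop :=
  forall a b c, mul a (mul b c) = mul (mul a b) c.

Definition allT : T -> Prop := fun _ => True.

Definition idem (e : T) : Prop := mul e e = e.

(* S^1 (or U^1): [None] is the adjoined identity *)
Definition lmul1 (u : option T) (a : T) : T :=
  match u with None => a | Some x => mul x a end.
Definition rmul1 (a : T) (u : option T) : T :=
  match u with None => a | Some x => mul a x end.

Definition in1 (U : T -> Prop) (u : option T) : Prop :=
  match u with None => True | Some x => U x end.

Definition GreenL (a b : T) : Prop :=
  (exists u, a = lmul1 u b) /\ (exists v, b = lmul1 v a).
Definition GreenR (a b : T) : Prop :=
  (exists u, a = rmul1 b u) /\ (exists v, b = rmul1 a v).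

(* R^* and L^* computed in the subsemigroup U (U = allT gives those of S) *)
Definition RStar_in (U : T -> Prop) (a b : T) : Prop :=
  forall x y, in1 U x -> in1 U y -> (lmul1 x a = lmul1 y a <-> lmul1 x b = lmul1 y b).
Definition LStar_in (U : T -> Prop) (a b : T) : Prop :=
  forall x y, in1 U x -> in1 U y -> (rmul1 a x = rmul1 a y <-> rmul1 b x = rmul1 b y).

Definition subsemigroup (U : T -> Prop) : Prop :=
  forall a b, U a -> U b -> U (mul a b).

Definition abundant_in (U : T -> Prop) : Prop :=
  forall a, U a ->
    (exists e, U e /\ idem e /\ RStar_in U a e) /\
    (exists f, U f /\ idem f /\ LStar_in U a f).

Definition adequate_in (U : T -> Prop) : Prop :=
  abundant_in U /\ forall e f, U e -> U f -> idem e -> idem f -> mul e f = mul f e.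

Definition quasi_adequate : Prop :=
  abundant_in allT /\ forall e f, idem e -> idem f -> idem (mul e f).

Definition star_subsemigroup (U : T -> Prop) : Prop :=
  subsemigroup U /\ abundant_in U /\
  forall a b, U a -> U b ->
    (LStar_in U a b <-> LStar_in allT a b) /\ (RStar_in U a b <-> RStar_in allT a b).

(* x = e xbar f with xbar in U, e,f idempotents, e L xbar^+, f R xbar^*,
   where xbar^+ (resp. xbar^star) is the idempotent of U R-star (resp. L-star) related
   to xbar (unique since U is adequate). *)
Definition decomp (U : T -> Prop) (x xbar e f : T) : Prop :=
  U xbar /\ idem e /\ idem f /\ x = mul (mul e xbar) f /\
  (exists g, U g /\ idem g /\ RStar_in U xbar g /\ GreenL e g) /\
  (exists h, U h /\ idem h /\ LStar_in U xbar h /\ GreenR f h).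

Definition adequate_transversal (U : T -> Prop) : Prop :=
  star_subsemigroup U /\ adequate_in U /\
  forall x, (exists xbar e f, decomp U x xbar e f) /\
            (forall xbar e f xbar' e' f',
               decomp U x xbar e f -> decomp U x xbar' e' f' -> xbar = xbar').

Definition inI (U : T -> Prop) (e : T) : Prop := exists x xbar f, decomp U x xbar e f.
Definition inLambda (U : T -> Prop) (f : T) : Prop := exists x xbar e, decomp U x xbar e f.

Definition is_x0 (U : T -> Prop) (x y : T) : Prop :=
  U y /\ mul (mul x y) x = x /\ mul (mul y x) y = y /\
  exists xbar e f, decomp U x xbar e f /\ mul x y = e /\ mul y x = f.

End Semigroups.


Set Implicit Arguments.

(* Write the idempotent x as x = e xbar f with xbar in S0, e L xplus and
   f R xstar, where xplus = xbar^+ and xstar = xbar^*.  Sandwiching x = x x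
   between xplus and xstar gives xbar f e xbar = xbar; the cancellation
   properties of R^* and L^* then force xbar f e = xplus and f e xbar = xstar.
   As f e is idempotent (E(S) is a subsemigroup), xbar = xplus xstar is a
   product of commuting idempotents of S0, hence idempotent, so
   xbar = xplus = xstar; then x xbar = e and xbar x = f, i.e. x^0 = xbar.
   Finally any inverse y of an idempotent x is the product (y x)(x y) of two
   idempotents, hence idempotent. *)

Section Semigroup.

Variables (T : Type) (mul : T -> T -> T).
Hypothesis assoc : associative mul.

Lemma GreenL_idem_mul (e g : T) :
  idem mul e -> idem mul g -> GreenL mul e g -> mul e g = e /\ mul g e = g.
Proof.
  intros He Hg [[u Hu] [v Hv]]; split.
  - destruct u as [u|]; simpl in Hu; rewrite Hu; [rewrite <- assoc, Hg; reflexivity | exact Hg].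
  - destruct v as [v|]; simpl in Hv; rewrite Hv; [rewrite <- assoc, He; reflexivity | exact He].
Qed.

Lemma GreenR_idem_mul (f h : T) :
  idem mul f -> idem mul h -> GreenR mul f h -> mul h f = f /\ mul f h = h.
Proof.
  intros Hf Hh [[u Hu] [v Hv]]; split.
  - destruct u as [u|]; simpl in Hu; rewrite Hu; [rewrite assoc, Hh; reflexivity | exact Hh].
  - destruct v as [v|]; simpl in Hv; rewrite Hv; [rewrite assoc, Hf; reflexivity | exact Hf].
Qed.

Lemma RStar_in_fix {U : T -> Prop} {a b u : T} :
  RStar_in mul U a b -> U u -> (mul u a = a <-> mul u b = b).
Proof. intros Hab Hu; exact (Hab (Some u) None Hu I). Qed.

Lemma LStar_in_fix {U : T -> Prop} {a b u : T} :
  LStar_in mul U a b -> U u -> (mul a u = a <-> mul b u = b).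
Proof. intros Hab Hu; exact (Hab (Some u) None Hu I). Qed.

Hypothesis idem_mul_closed :
  forall e f, idem mul e -> idem mul f -> idem mul (mul e f).

Lemma inverse_of_idem_idem (x y : T) :
  idem mul x -> mul (mul x y) x = x -> mul (mul y x) y = y -> idem mul y.
Proof.
  intros Hx Hxyx Hyxy.
  assert (y_eq : y = mul (mul y x) (mul x y)).
  { rewrite assoc, <- (assoc y x x), Hx; symmetry; exact Hyxy. }
  rewrite y_eq; apply idem_mul_closed; unfold idem.
  - rewrite assoc, Hyxy; reflexivity.
  - rewrite assoc, Hxyx; reflexivity.
Qed.

Section IdempotentDecomposition.

Variable S0 : T -> Prop.
Hypothesis S0_idem_comm :
  forall e f, S0 e -> S0 f -> idem mul e -> idem mul f -> mul e f = mul f e.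

Variables (xbar e f xplus xstar : T).
Hypotheses (Hxplus : S0 xplus) (Hxstar : S0 xstar)
  (Hxplus_idem : idem mul xplus) (Hxstar_idem : idem mul xstar)
  (He : idem mul e) (Hf : idem mul f).
Hypotheses (e_xplus : mul e xplus = e) (xplus_e : mul xplus e = xplus)
  (xstar_f : mul xstar f = f) (f_xstar : mul f xstar = xstar)
  (xplus_xbar : mul xplus xbar = xbar) (xbar_xstar : mul xbar xstar = xbar).
Hypotheses (HR : RStar_in mul (@allT T) xbar xplus) (HL : LStar_in mul (@allT T) xbar xstar).
Hypothesis Hx : idem mul (mul (mul e xbar) f).

Lemma xbar_fe_xbar : mul (mul (mul xbar f) e) xbar = xbar.
Proof.
  transitivity (mul (mul xplus (mul (mul (mul e xbar) f) (mul (mul e xbar) f))) xstar).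
  - rewrite !assoc, xplus_e, xplus_xbar, <- (assoc _ f xstar), f_xstar,
      <- (assoc _ xbar xstar), xbar_xstar.
    reflexivity.
  - rewrite Hx, !assoc, xplus_e, xplus_xbar, <- (assoc _ f xstar), f_xstar, xbar_xstar.
    reflexivity.
Qed.

Lemma fe_xbar : mul (mul f e) xbar = xstar.
Proof.
  transitivity (mul xstar (mul (mul f e) xbar)).
  - rewrite !assoc, xstar_f; reflexivity.
  - apply (LStar_in_fix HL I); rewrite !assoc; exact xbar_fe_xbar.
Qed.

Lemma xbar_fe : mul (mul xbar f) e = xplus.
Proof.
  transitivity (mul (mul (mul xbar f) e) xplus).
  - rewrite <- (assoc _ e xplus), e_xplus; reflexivity.
  - apply (RStar_in_fix HR I); exact xbar_fe_xbar.
Qed.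

Lemma xplus_xstar : mul xplus xstar = xbar.
Proof.
  pose proof (idem_mul_closed Hf He) as fe_idem.
  rewrite <- xbar_fe, <- fe_xbar, <- (assoc xbar f e),
    (assoc (mul xbar (mul f e)) (mul f e) xbar), <- (assoc xbar (mul f e) (mul f e)),
    fe_idem, assoc.
  exact xbar_fe_xbar.
Qed.

Let xplus_xstar_comm : mul xplus xstar = mul xstar xplus :=
  S0_idem_comm Hxplus Hxstar Hxplus_idem Hxstar_idem.

Lemma xbar_idem : idem mul xbar.
Proof.
  unfold idem; rewrite <- xplus_xstar.
  rewrite assoc, <- (assoc xplus xstar xplus), <- xplus_xstar_comm,
    (assoc xplus xplus xstar), Hxplus_idem, <- assoc, Hxstar_idem.
  reflexivity.
Qed.

Lemma xplus_eq_xbar : xplus = xbar.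
Proof.
  rewrite <- (proj1 (RStar_in_fix (u := xbar) HR I) xbar_idem), <- xplus_xstar, <- assoc,
    <- xplus_xstar_comm, assoc, Hxplus_idem.
  reflexivity.
Qed.

Lemma xstar_eq_xbar : xstar = xbar.
Proof.
  rewrite <- (proj1 (LStar_in_fix (u := xbar) HL I) xbar_idem), <- xplus_xstar, assoc,
    <- xplus_xstar_comm, <- assoc, Hxstar_idem.
  reflexivity.
Qed.

Lemma idem_xbar_eq_xplus_xstar : idem mul xbar /\ xplus = xbar /\ xstar = xbar.
Proof. exact (conj xbar_idem (conj xplus_eq_xbar xstar_eq_xbar)). Qed.

End IdempotentDecomposition.

Lemma idem_decomp_x0 (S0 : T -> Prop) (x xbar e f : T) :
  star_subsemigroup mul S0 ->
  (forall e f, S0 e -> S0 f -> idem mul e -> idem mul f -> mul e f = mul f e) ->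
  idem mul x -> decomp mul S0 x xbar e f -> is_x0 mul S0 x xbar.
Proof.
  intros [_ [_ Hstar]] Hcomm Hx D.
  pose proof D as
    [Hxbar [He [Hf [x_eq [[g [Hg [Hg_idem [HRg HLg]]]] [h [Hh [Hh_idem [HLh HRh]]]]]]]]].
  destruct (GreenL_idem_mul He Hg_idem HLg) as [e_g g_e].
  destruct (GreenR_idem_mul Hf Hh_idem HRh) as [h_f f_h].
  pose proof (proj2 (RStar_in_fix HRg Hg) Hg_idem) as g_xbar.
  pose proof (proj2 (LStar_in_fix HLh Hh) Hh_idem) as xbar_h.
  pose proof (proj1 (proj2 (Hstar _ _ Hxbar Hg)) HRg) as HRgS.
  pose proof (proj1 (proj1 (Hstar _ _ Hxbar Hh)) HLh) as HLhS.
  rewrite x_eq in Hx.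
  destruct (idem_xbar_eq_xplus_xstar S0 Hcomm Hg Hh Hg_idem Hh_idem He Hf e_g g_e h_f f_h
    g_xbar xbar_h HRgS HLhS Hx) as [xbar_idem' [-> ->]].
  assert (x_xbar : mul x xbar = e).
  { rewrite x_eq, <- (assoc _ f xbar), f_h, <- assoc, xbar_idem'; exact e_g. }
  assert (xbar_x : mul xbar x = f).
  { rewrite x_eq, !assoc, g_e, xbar_idem'; exact h_f. }
  split; [exact Hxbar | split; [| split]].
  - rewrite x_xbar, x_eq, !assoc, He; reflexivity.
  - rewrite xbar_x; exact f_h.
  - exists xbar, e, f; split; [exact D | split; assumption].
Qed.

End Semigroup.

Theorem corollary2p2 (T : Type) (mul : T -> T -> T) (S0 : T -> Prop)
  (Hassoc : associative mul)
  (Hqa : quasi_adequate mul)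
  (Htr : adequate_transversal mul S0) :
  forall x : T,
    idem mul x \/ inI mul S0 x \/ inLambda mul S0 x ->
    (exists y, is_x0 mul S0 x y) /\
    (forall y, is_x0 mul S0 x y -> S0 y /\ idem mul y).
Proof.
  intros x Hx.
  destruct Htr as [Hstar [[_ Hcomm] Hdec]].
  assert (Hx_idem : idem mul x).
  { destruct Hx as [Hx | [[z [zbar [f D]]] | [z [zbar [e D]]]]].
    - exact Hx.
    - exact (proj1 (proj2 D)).
    - exact (proj1 (proj2 (proj2 D))). }
  split.
  - destruct (Hdec x) as [[xbar [e [f D]]] _].
    exists xbar; exact (idem_decomp_x0 Hassoc (proj2 Hqa) Hstar Hcomm Hx_idem D).
  - intros y [Hy [Hxyx [Hyxy _]]].
    exact (conj Hy (inverse_of_idem_idem Hassoc (proj2 Hqa) Hx_idem Hxyx Hyxy)).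
Qed.
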